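(* Let $X_\lambda$ be a cellular multipointed $d$-space and $\gamma$ an execution path of $X_\lambda$. Then there exist minimal execution paths $\gamma_1,\dots,\gamma_n$ ($n\ge1$) and real numbers $\ell_1,\dots,\ell_n>0$ with $\sum_i\ell_i=1$ such that $\gamma=(\gamma_1\mu_{\ell_1})*\dots*(\gamma_n\mu_{\ell_n})$. Moreover, if also $\gamma=(\gamma'_1\mu_{\ell'_1})*\dots*(\gamma'_{n'}\mu_{\ell'_{n'}})$ with all $\gamma'_j$ minimal and $\ell'_j>0$, then $n=n'$, $\gamma_i=\gamma'_i$ and $\ell_i=\ell'_i$ for all $1\le i\le n$.
   Context: Work in $\mathbf{Top}$, the category of $\Delta$-generated spaces (or $\Delta$-Hausdorff $\Delta$-generated spaces). $\mathcal{G}(1,1)$: nondecreasing homeomorphisms of $[0,1]$. $\mu_\ell:[0,\ell]\to[0,1]$, $t\mapsto t/\ell$. Moore composition: for $\gamma_i:[0,\ell_i]\to U$ with $\gamma_i(\ell_i)=\gamma_{i+1}(0)$, $\gamma_1*\dots*\gamma_n:[0,\sum\ell_i]\to U$ is $t\mapsto\gamma_i(t-\sum_{j<i}\ell_j)$ on $[\sum_{j<i}\ell_j,\sum_{j\le i}\ell_j]$. $*_N$: normalized composition of paths on $[0,1]$. A multipointed $d$-space $X=(|X|,X^0,\mathbb{P}^{\mathcal{G}}X)$: a space, a subset of states, a set of continuous execution paths $[0,1]\to|X|$ with endpoints in $X^0$, stable under precomposition by $\mathcal{G}(1,1)$ and $*_N$. Colimits: underlying spaces and states by colimits, execution paths generated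 by images under $*_N$ and reparametrization. ${\rm Glob}^{\mathcal{G}}(Z)$: quotient of $\{0,1\}\sqcup Z\times[0,1]$ with $(z,0)\sim0$, $(z,1)\sim1$, states $\{0,1\}$, paths $t\mapsto(z,\phi(t))$, $\phi\in\mathcal{G}(1,1)$. Cellular: $X_\lambda=\varinjlim_{\nu<\lambda}X_\nu$ for an ordinal $\lambda$ and colimit-preserving $\nu\mapsto X_\nu$ with $X_0=(X^0,X^0,\varnothing)$ and each $X_\nu\to X_{\nu+1}$ a pushout of some ${\rm Glob}^{\mathcal{G}}(\mathbf{S}^{n_\nu-1})\subset{\rm Glob}^{\mathcal{G}}(\mathbf{D}^{n_\nu})$. An execution path $\gamma$ of $X$ is minimal if $\gamma(]0,1[)\cap X^0=\varnothing$. *)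

From HB Require Import structures.
From mathcomp Require Import all_boot all_order all_algebra.
From mathcomp Require Import all_classical all_reals all_analysis.
Set Implicit Arguments. Unset Strict Implicit. Unset Printing Implicit Defensive.
Import Order.TTheory GRing.Theory Num.Theory.
Import numFieldNormedType.Exports.
Local Open Scope classical_set_scope.
Local Open Scope ring_scope.
Local Open Scope quotient_scope.

Section MDSpaces.
Variable R : realType.

Definition I01 : set R := [set t | 0 <= t <= 1].

(** G(1,1): nondecreasing homeomorphisms of [0,1] (as functions R -> R,
    only their values on [0,1] matter) *)
Definition G11 (phi : R -> R) : Prop :=
  {within I01, continuous phi} /\
  (forall t, I01 t -> I01 (phi t)) /\
  (forall s t, I01 s -> I01 t -> s <= t -> phi s <= phi t) /\
  exists psi : R -> R,
    {within I01, continuous psi} /\ (forall t, I01 t -> I01 (psi t)) /\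
    (forall t, I01 t -> psi (phi t) = t) /\ (forall t, I01 t -> phi (psi t) = t).

Definition ncomp (T : Type) (g1 g2 : R -> T) : R -> T :=
  fun t => if t <= 2^-1 then g1 (2 * t) else g2 (2 * t - 1).

(** Execution paths [0,1] -> |X| are represented by functions R -> |X|
    whose values outside [0,1] are irrelevant (see is_mdspace). *)
Record mdspace := MDSpace {
  mcar :> topologicalType;
  mstates : set mcar;
  mpaths : set (R -> mcar) }.
Arguments mstates : clear implicits.
Arguments mpaths : clear implicits.

Definition is_mdspace (X : mdspace) : Prop :=
  (forall g, mpaths X g ->
     {within I01, continuous g} /\ mstates X (g 0) /\ mstates X (g 1)) /\
  (forall g phi, mpaths X g -> G11 phi -> mpaths X (g \o phi)) /\
  (forall g1 g2, mpaths X g1 -> mpaths X g2 -> g1 1 = g2 0 ->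
     mpaths X (ncomp g1 g2)) /\
  (* a path is a map on [0,1]: values outside [0,1] are irrelevant *)
  (forall g g', mpaths X g -> (forall t, I01 t -> g' t = g t) -> mpaths X g').

Definition morphism (X Y : mdspace) (h : X -> Y) : Prop :=
  continuous h /\ (forall x, mstates X x -> mstates Y (h x)) /\
  (forall g, mpaths X g -> mpaths Y (h \o g)).

Definition is_pushout (A B C D : mdspace) (i : A -> B) (phi : A -> C)
    (j : C -> D) (psi : B -> D) : Prop :=
  is_mdspace D /\ morphism j /\ morphism psi /\ j \o phi = psi \o i /\
  forall (W : mdspace) (u : C -> W) (v : B -> W),
    is_mdspace W -> morphism u -> morphism v -> u \o phi = v \o i ->
    exists w : D -> W, (morphism w /\ w \o j = u /\ w \o psi = v) /\
      forall w' : D -> W, morphism w' -> w' \o j = u -> w' \o psi = v -> w' = w.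

Definition is_colimit_on (d : Order.disp_t) (O : orderType d) (P : set O)
    (Xs : O -> mdspace) (f : forall a b : O, Xs a -> Xs b)
    (Y : mdspace) (g : forall a : O, Xs a -> Y) : Prop :=
  is_mdspace Y /\ (forall a, P a -> morphism (g a)) /\
  (forall a b, P a -> P b -> (a <= b)%O -> g b \o f a b = g a) /\
  forall (W : mdspace) (h : forall a : O, Xs a -> W),
    is_mdspace W -> (forall a, P a -> morphism (h a)) ->
    (forall a b, P a -> P b -> (a <= b)%O -> h b \o f a b = h a) ->
    exists u : Y -> W, (morphism u /\ forall a, P a -> u \o g a = h a) /\
      forall u' : Y -> W, morphism u' -> (forall a, P a -> u' \o g a = h a) ->
        u' = u.

Arguments is_colimit_on {d O} P Xs f Y g.

(** ** Globes  Glob(Z) = ({0,1} ⊔ Z×[0,1]) / ((z,0)~0, (z,1)~1) *)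
Section Glob.
Variable Z : topologicalType.

Definition boolT : topologicalType := bool.
Definition cylT : topologicalType := (Z * set_type I01)%type.
(* the disjoint sum {0,1} ⊔ Z×[0,1]  (true = the discrete {0,1}) *)
Definition glob_fam (b : bool) : topologicalType := if b then boolT else cylT.
Definition glob_pre := {b : bool & glob_fam b}.

(* class of a point: the endpoint it is glued to, if any *)
Definition glob_key (x : glob_pre) : bool + glob_pre :=
  match x with
  | existT b y =>
    (match b return glob_fam b -> bool + glob_pre with
     | true => fun y => inl y
     | false => fun y =>
         if sval y.2 == 0 then inl false
         else if sval y.2 == 1 then inl true
         else inr (existT glob_fam false y)
     end) y
  end.

Definition glob_rel' (x y : glob_pre) : bool := `[< glob_key x = glob_key y >].

Lemma glob_rel_refl : reflexive glob_rel'.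
Proof. by move=> x; apply/asboolP. Qed.
Lemma glob_rel_sym : symmetric glob_rel'.
Proof.
move=> x y; apply/idP/idP => /asboolP e; apply/asboolP; by rewrite e.
Qed.
Lemma glob_rel_trans : transitive glob_rel'.
Proof.
move=> y x z /asboolP e1 /asboolP e2; apply/asboolP; by rewrite e1 e2.
Qed.

Definition glob_rel := EquivRel _ glob_rel_refl glob_rel_sym glob_rel_trans.
Definition glob := {eq_quot glob_rel}.
HB.instance Definition _ := Topological.copy glob (quotient_topology glob).
HB.instance Definition _ := Quotient.on glob.

Lemma I01_0 : (0 : R) \in I01.
Proof. by apply/mem_set; rewrite /I01 /= lexx ler01. Qed.

Definition to01 (t : R) : set_type I01 :=
  match pselect (I01 t) with
  | left h => exist _ t (mem_set h)
  | right _ => exist _ 0 I01_0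
  end.

Definition glob_pt (b : bool) : glob := \pi_glob (existT glob_fam true b).
Definition glob_cyl (z : Z) (t : R) : glob :=
  \pi_glob (existT glob_fam false (z, to01 t)).

Definition Glob : mdspace := @MDSpace glob
  [set x | exists b, x = glob_pt b]
  [set g | exists z phi, G11 phi /\ forall t, I01 t -> g t = glob_cyl z (phi t)].
End Glob.

Definition glob_pre_map (Z Z' : topologicalType) (h : Z -> Z')
    (x : glob_pre Z) : glob_pre Z' :=
  match x with
  | existT b y =>
    (match b return glob_fam Z b -> glob_pre Z' with
     | true => fun y => existT (glob_fam Z') true y
     | false => fun y => existT (glob_fam Z') false (h y.1, y.2)
     end) y
  end.
Definition glob_map (Z Z' : topologicalType) (h : Z -> Z') :
    Glob Z -> Glob Z' :=
  fun q => \pi_(glob Z') (glob_pre_map h (repr q)).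

Definition disk (n : nat) : set 'rV[R]_n :=
  [set x | \sum_(i < n) x ord0 i ^+ 2 <= 1].
Definition sphere (n : nat) : set 'rV[R]_n :=
  [set x | \sum_(i < n) x ord0 i ^+ 2 = 1].
Definition Dsk (n : nat) : topologicalType := set_type (@disk n).
Definition Sph (n : nat) : topologicalType := set_type (@sphere n).

Lemma sphere_disk (n : nat) (x : Sph n) : sval x \in @disk n.
Proof.
apply/mem_set; have := set_mem (svalP x); rewrite /sphere /disk /= => ->.
exact: lexx.
Qed.
Definition sph_to_dsk (n : nat) (x : Sph n) : Dsk n :=
  exist _ (sval x) (sphere_disk x).

Definition cell_incl (n : nat) : Glob (Sph n) -> Glob (Dsk n) :=
  glob_map (@sph_to_dsk n).

Section Tower.
Context {d : Order.disp_t} {O : orderType d}.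

Definition is_least (a : O) : Prop := forall b, ~ (b < a)%O.
Definition is_succ (a b : O) : Prop :=
  (a < b)%O /\ forall c, ~ ((a < c)%O /\ (c < b)%O).
Definition is_limit (b : O) : Prop := ~ is_least b /\ forall a, ~ is_succ a b.

(* (X_nu)_{nu < lambda} indexed by the well-ordered O (= lambda), with
   X = X_lambda = colim_{nu < lambda} X_nu *)
Definition cellular_tower (Xs : O -> mdspace) (f : forall a b : O, Xs a -> Xs b)
    (X : mdspace) (g : forall a : O, Xs a -> X) : Prop :=
  well_founded (fun a b : O => (a < b)%O) /\
  (forall a, is_mdspace (Xs a)) /\
  (forall a b, (a <= b)%O -> morphism (f a b)) /\
  (forall a, f a a = id) /\
  (forall a b c, (a <= b)%O -> (b <= c)%O -> f b c \o f a b = f a c) /\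
  (forall a, is_least a ->
     (forall A : set (Xs a), open A) /\ mstates (Xs a) = setT /\
     mpaths (Xs a) = set0) /\
  (forall a b, is_succ a b ->
     exists (n : nat) (phi : Glob (Sph n) -> Xs a) (psi : Glob (Dsk n) -> Xs b),
       morphism phi /\ is_pushout (@cell_incl n) phi (f a b) psi) /\
  (forall b, is_limit b ->
     is_colimit_on [set a | (a < b)%O] Xs f (Xs b) (fun a => f a b)) /\
  is_colimit_on setT Xs f X g.
End Tower.
Arguments cellular_tower {d O} Xs f X g.

Definition cellular (X : mdspace) : Prop :=
  exists (d : Order.disp_t) (O : orderType d) (Xs : O -> mdspace)
    (f : forall a b : O, Xs a -> Xs b) (g : forall a : O, Xs a -> X),
    cellular_tower Xs f X g.

Definition minimal (X : mdspace) (g : R -> X) : Prop :=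
  mpaths X g /\ forall t, 0 < t < 1 -> ~ mstates X (g t).

(** gamma = (g_0 mu_{l_0}) * ... * (g_{n-1} mu_{l_{n-1}}) (Moore composition,
    indices shifted to 0..n-1), with all g_i minimal and l_i > 0 *)
Definition Lsum (ls : nat -> R) (i : nat) : R := \sum_(0 <= j < i) ls j.

Definition minimal_decomp (X : mdspace) (gam : R -> X) (n : nat)
    (gs : nat -> R -> X) (ls : nat -> R) : Prop :=
  (0 < n)%N /\
  (forall i, (i < n)%N -> minimal (gs i) /\ 0 < ls i) /\
  Lsum ls n = 1 /\
  (forall i, (i.+1 < n)%N -> gs i 1 = gs i.+1 0) /\
  (forall i, (i < n)%N -> forall t, Lsum ls i <= t <= Lsum ls i + ls i ->
     gam t = gs i ((t - Lsum ls i) / ls i)).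

End MDSpaces.
Arguments minimal {R} X g.
Arguments minimal_decomp {R} X gam n gs ls.
Arguments morphism {R} X Y h.
Arguments is_mdspace {R} X.
Arguments mstates {R} m _.
Arguments mpaths {R} m _.
Arguments is_colimit_on {R d O} P Xs f Y g.
Arguments cellular_tower {R d O} Xs f X g.
Arguments is_pushout {R A B C D} i phi j psi.

(* Call an execution path decomposable when it is a Moore composition of
   minimal paths.  Decomposable paths are stable under reparametrization,
   normalized composition and change of values outside [0,1], so they form a
   multipointed d-space structure on |X| with the same states.  By the
   universal properties of pushouts and colimits, every path of X_lambda is
   then decomposable as soon as the images of the paths of the attached globes
   are, which is proved by well-founded induction along the tower: a path of
   Glob(D^n) through a point of the sphere comes from the previous stage, and
   a path through an interior point z of the disk is minimal, because the
   points (z, t) with 0 < t < 1 never become states (this is detected by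
   morphisms into a two-point space with the indiscrete topology).
   Uniqueness holds because the break points of a decomposition are states
   and the points strictly between them are not. *)

From HB Require Import structures.
From mathcomp Require Import all_boot all_order all_algebra.
From mathcomp Require Import all_classical all_reals all_analysis.
From mathcomp Require Import ring lra zify.
From Stdlib Require Import Eqdep_dec.
Import Order.TTheory GRing.Theory Num.Theory.
Import numFieldNormedType.Exports.
Local Open Scope classical_set_scope.
Local Open Scope ring_scope.
Local Open Scope quotient_scope.
Set Implicit Arguments. Unset Strict Implicit. Unset Printing Implicit Defensive.

Section Reparametrization.
Variable R : realType.
Implicit Types (f phi psi : R -> R) (s t : R).

Lemma I01_zero : I01 (0 : R). Proof. by rewrite /I01 /= lexx ler01. Qed.
Lemma I01_one : I01 (1 : R). Proof. by rewrite /I01 /= lexx ler01. Qed.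

Lemma I01_affine (M m s : R) : 0 <= M -> M + m <= 1 -> 0 < m -> I01 s ->
  I01 (M + s * m).
Proof. by move=> M0 Mm1 m0 /andP[s0 s1]; apply/andP; split; nra. Qed.

Lemma I01_rescale (y L l : R) : L <= y <= L + l -> 0 < l -> I01 ((y - L) / l).
Proof.
move=> /andP[Ly yLl] l0; rewrite /I01 /= divr_ge0 ?subr_ge0 ?(ltW l0) //=.
by rewrite ler_pdivrMr // mul1r lerBlDl.
Qed.

Lemma I01_between (a b t : R) : I01 a -> I01 b -> a <= t <= b -> I01 t.
Proof.
move=> /andP[a0 _] /andP[_ b1] /andP[le_at le_tb].
by apply/andP; split; [exact: le_trans a0 le_at | exact: le_trans le_tb b1].
Qed.

Definition monotone01 f : Prop :=
  [/\ {within @I01 R, continuous f}, forall t, I01 t -> I01 (f t)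
    & forall s t, I01 s -> I01 t -> s <= t -> f s <= f t].

Lemma G11_monotone01 phi : G11 phi -> monotone01 phi.
Proof. by case=> cphi [mphi [phim _]]; split. Qed.

Lemma G11_of_inverse phi psi : monotone01 phi -> monotone01 psi ->
  (forall t, I01 t -> psi (phi t) = t) -> (forall t, I01 t -> phi (psi t) = t) ->
  G11 phi.
Proof.
by case=> cphi mphi phim [cpsi mpsi _] psiK phiK; do 3 split=> //; exists psi.
Qed.

Lemma G11_inv phi : G11 phi -> exists psi, [/\ G11 psi,
  forall t, I01 t -> psi (phi t) = t & forall t, I01 t -> phi (psi t) = t].
Proof.
move=> G; have [cphi mphi phim] := G11_monotone01 G.
case: G => _ [_ [_ [psi [cpsi [mpsi [psiK phiK]]]]]].
have psim s t : I01 s -> I01 t -> s <= t -> psi s <= psi t.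
  move=> Is It st; rewrite leNgt; apply/negP => ts.
  have := phim _ _ (mpsi _ It) (mpsi _ Is) (ltW ts); rewrite !phiK // => le_ts.
  have est : s = t by apply/eqP; rewrite eq_le st le_ts.
  by rewrite est ltxx in ts.
exists psi; split=> //; apply: (G11_of_inverse (psi := phi)) => //; by split.
Qed.

Lemma G11_0 phi : G11 phi -> phi 0 = 0.
Proof.
case=> _ [mphi [phim [psi [_ [mpsi [_ phiK]]]]]].
have /andP[phi0 _] := mphi _ I01_zero; have /andP[psi0 _] := mpsi _ I01_zero.
apply/eqP; rewrite eq_le phi0 andbT -{2}(phiK _ I01_zero).
exact: phim _ _ I01_zero (mpsi _ I01_zero) psi0.
Qed.

Lemma G11_1 phi : G11 phi -> phi 1 = 1.
Proof.
case=> _ [mphi [phim [psi [_ [mpsi [_ phiK]]]]]].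
have /andP[_ phi1] := mphi _ I01_one; have /andP[_ psi1] := mpsi _ I01_one.
apply/eqP; rewrite eq_le phi1 /= -{1}(phiK _ I01_one).
exact: phim _ _ (mpsi _ I01_one) I01_one psi1.
Qed.

Lemma G11_lt phi s t : G11 phi -> I01 s -> I01 t -> s < t -> phi s < phi t.
Proof.
move=> G Is It st; have [psi [_ psiK _]] := G11_inv G.
have [_ _ phim] := G11_monotone01 G.
rewrite lt_neqAle phim ?(ltW st) // andbT; apply/negP => /eqP est.
by have := psiK _ Is; rewrite est psiK // => ets; rewrite ets ltxx in st.
Qed.

Lemma G11_interior phi t : G11 phi -> 0 < t < 1 -> 0 < phi t < 1.
Proof.
move=> G /andP[t0 t1]; have It : I01 t by rewrite /I01 /= !ltW.
rewrite -{1}(G11_0 G) -(G11_1 G) !(G11_lt G) //; [exact: I01_zero | exact: I01_one].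
Qed.

Lemma continuous_affine (a b : R) : continuous (fun s : R => a + s * b).
Proof.
move=> x; apply: (@cvgD _ _ _ _ _ (fun _ => a) (fun s => s * b)).
  exact: cvg_cst.
exact: (@cvgMl _ _ _ _ id x b cvg_id).
Qed.

Lemma within_I01_comp_affine f (a b : R) : {within @I01 R, continuous f} ->
  (forall s, I01 s -> I01 (a + s * b)) ->
  {within @I01 R, continuous (fun s => f (a + s * b))}.
Proof.
move=> /subspace_continuousP cf hab; apply/subspace_continuousP => x Ix.
apply: (@cvg_comp _ _ _ (fun s => a + s * b) f _
  (within (@I01 R) (nbhs (a + x * b)))); last exact: cf _ (hab _ Ix).
move=> W /= HW; have := @continuous_affine a b x (fun z => I01 z -> W z) HW.
rewrite /within /= !nbhs_simpl /=; apply: filterS => s /= Ws Is.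
exact: Ws (hab _ Is).
Qed.

Definition rescale f (M m L l : R) s := (f (M + s * m) - L) / l.

Lemma rescale_monotone01 f (M m L l : R) : monotone01 f ->
  I01 M -> I01 (M + m) -> 0 < m -> 0 < l -> f M = L -> f (M + m) = L + l ->
  monotone01 (rescale f M m L l).
Proof.
move=> [cf mf fm] IM IMm m0 l0 fM fMm.
have IA s : I01 s -> I01 (M + s * m).
  by case/andP: IM => M0 _; case/andP: IMm => _ Mm1; apply: I01_affine.
split.
- apply: (@within_continuous_comp _ _ _ _ _ (fun y => (y - L) / l));
    last exact: within_I01_comp_affine.
  move=> y _; apply: (@cvgMl _ _ _ _ (fun y => y - L)).
  by apply: (@cvgD _ _ _ _ _ id (fun _ => - L)); [exact: cvg_id | exact: cvg_cst].
- move=> s /[dup] Is /andP[s0 s1]; apply: I01_rescale => //; apply/andP; split.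
    rewrite -fM; apply: fm => //; first exact: IA.
    by rewrite lerDl mulr_ge0 // ltW.
  by rewrite -fMm; apply: fm => //; [exact: IA | rewrite lerD2l ger_pMl].
- move=> s t Is It st; rewrite ler_pM2r ?invr_gt0 // lerD2r.
  by apply: fm; [exact: IA | exact: IA | rewrite lerD2l ler_pM2r].
Qed.

Lemma rescale_at_inverse f (M m L l t : R) : m != 0 ->
  rescale f M m L l ((t - M) / m) = (f t - L) / l.
Proof. by move=> m0; rewrite /rescale (_ : M + _ * m = t) //; field. Qed.

Lemma rescaleK f g (M m L l s : R) : (forall t, I01 t -> g (f t) = t) ->
  I01 (M + s * m) -> m != 0 -> l != 0 ->
  rescale g L l M m (rescale f M m L l s) = s.
Proof.
move=> fK Is m0 l0; rewrite /rescale.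
have -> : L + (f (M + s * m) - L) / l * l = f (M + s * m) by field.
by rewrite fK //; field.
Qed.

Lemma G11_restrict phi psi (L l : R) : G11 phi -> G11 psi ->
  (forall t, I01 t -> psi (phi t) = t) -> (forall t, I01 t -> phi (psi t) = t) ->
  I01 L -> I01 (L + l) -> 0 < l ->
  G11 (rescale phi (psi L) (psi (L + l) - psi L) L l).
Proof.
move=> Gphi Gpsi psiK phiK IL ILl l0.
have [_ mpsi _] := G11_monotone01 Gpsi.
have m0 : 0 < psi (L + l) - psi L by rewrite subr_gt0 (G11_lt Gpsi) // ltrDl.
have IMm : I01 (psi L + (psi (L + l) - psi L)).
  by rewrite (addrC (psi L)) subrK; apply: mpsi.
have IA s : I01 s -> I01 (psi L + s * (psi (L + l) - psi L)).
  by case/andP: (mpsi _ IL) => M0 _; case/andP: IMm => _ ?; apply: I01_affine.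
have IB u : I01 u -> I01 (L + u * l).
  by case/andP: IL => L0 _; case/andP: ILl => _ ?; apply: I01_affine.
apply: (G11_of_inverse (psi := rescale psi L l (psi L) (psi (L + l) - psi L))).
- apply: rescale_monotone01 => //; first exact: G11_monotone01.
  + exact: mpsi.
  + exact: phiK.
  + by rewrite (addrC (psi L)) subrK phiK.
- apply: rescale_monotone01 => //; first exact: G11_monotone01.
  by rewrite (addrC (psi L)) subrK.
- by move=> s Is; apply: rescaleK => //; [exact: IA | exact: lt0r_neq0 ..].
- by move=> u Iu; apply: rescaleK => //; [exact: IB | exact: lt0r_neq0 ..].
Qed.

Lemma ncomp_piece_lo (T : Type) (g1 g2 gi : R -> T) (L l t : R) :
  0 < l -> L + l <= 1 -> (forall u, L <= u <= L + l -> g1 u = gi ((u - L) / l)) ->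
  2^-1 * L <= t <= 2^-1 * L + 2^-1 * l ->
  ncomp g1 g2 t = gi ((t - 2^-1 * L) / (2^-1 * l)).
Proof.
move=> l0 Ll1 g1_piece /andP[t1 t2]; rewrite /ncomp ifT; last by lra.
rewrite (_ : (t - _) / _ = (2 * t - L) / l); last by field; rewrite gt_eqF.
by apply: g1_piece; apply/andP; split; lra.
Qed.

Lemma ncomp_piece_hi (T : Type) (g1 g2 gi : R -> T) (L l t : R) :
  0 <= L -> 0 < l -> g1 1 = g2 0 ->
  (forall u, L <= u <= L + l -> g2 u = gi ((u - L) / l)) ->
  2^-1 + 2^-1 * L <= t <= 2^-1 + 2^-1 * L + 2^-1 * l ->
  ncomp g1 g2 t = gi ((t - (2^-1 + 2^-1 * L)) / (2^-1 * l)).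
Proof.
move=> L0 l0 E12 g2_piece /andP[t1 t2].
have -> : ncomp g1 g2 t = g2 (2 * t - 1).
  rewrite /ncomp; case: ifP => // th; have -> : t = 2^-1 by lra.
  by rewrite divff // subrr.
rewrite (_ : (t - _) / _ = (2 * t - 1 - L) / l); last by field; rewrite gt_eqF.
by apply: g2_piece; apply/andP; split; lra.
Qed.

End Reparametrization.

Section BreakPoints.
Variable R : realType.
Implicit Types (ls : nat -> R).

Lemma Lsum0 ls : Lsum ls 0 = 0.
Proof. by rewrite /Lsum big_geq. Qed.

Lemma LsumS ls i : Lsum ls i.+1 = Lsum ls i + ls i.
Proof. by rewrite /Lsum big_nat_recr. Qed.

Lemma LsumZ (c : R) ls i : Lsum (fun j => c * ls j) i = c * Lsum ls i.
Proof. by rewrite /Lsum mulr_sumr. Qed.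

Lemma Lsum_le ls n i k : (forall j, (j < n)%N -> 0 < ls j) ->
  (i <= k)%N -> (k <= n)%N -> Lsum ls i <= Lsum ls k.
Proof.
move=> ls_gt0 ik kn; elim: k ik kn => [|k IH] ik kn.
  by move: ik; rewrite leqn0 => /eqP ->.
move: ik; rewrite leq_eqVlt => /orP[/eqP -> //|]; rewrite ltnS => ik.
by rewrite LsumS (le_trans (IH ik (ltnW kn))) // lerDl ltW ?ls_gt0.
Qed.

Lemma Lsum_lt ls n i k : (forall j, (j < n)%N -> 0 < ls j) ->
  (i < k)%N -> (k <= n)%N -> Lsum ls i < Lsum ls k.
Proof.
move=> ls_gt0 ik kn; case: k ik kn => // k ik kn.
by rewrite LsumS (le_lt_trans (Lsum_le ls_gt0 _ (ltnW kn))) // ltrDl ls_gt0.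
Qed.

Lemma Lsum_ge0 ls n i : (forall j, (j < n)%N -> 0 < ls j) ->
  (i <= n)%N -> 0 <= Lsum ls i.
Proof. by move=> ls_gt0 hi; rewrite -(Lsum0 ls) (Lsum_le ls_gt0). Qed.

Definition catf (T : Type) (n1 : nat) (a b : nat -> T) (i : nat) : T :=
  if (i < n1)%N then a i else b (i - n1)%N.

Lemma Lsum_catf_lo n1 (a b : nat -> R) i : (i <= n1)%N ->
  Lsum (catf n1 a b) i = Lsum a i.
Proof.
elim: i => [|i IH] hi; first by rewrite !Lsum0.
by rewrite !LsumS IH ?(ltnW hi) // /catf hi.
Qed.

Lemma Lsum_catf_hi n1 (a b : nat -> R) k :
  Lsum (catf n1 a b) (n1 + k) = Lsum a n1 + Lsum b k.
Proof.
elim: k => [|k IH]; first by rewrite addn0 Lsum_catf_lo // Lsum0 addr0.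
rewrite addnS !LsumS IH /catf ltnNge leq_addr /= addKn; ring.
Qed.

End BreakPoints.

Section Decompositions.
Variables (R : realType) (X : mdspace R).
Implicit Types (g : R -> X) (gs : nat -> R -> X) (ls : nat -> R).

Lemma decomp_gt0 g n gs ls : minimal_decomp X g n gs ls ->
  forall j, (j < n)%N -> 0 < ls j.
Proof. by case=> _ [hm _] j /hm[]. Qed.

Lemma decomp_I01 g n gs ls i : minimal_decomp X g n gs ls -> (i < n)%N ->
  I01 (Lsum ls i) /\ I01 (Lsum ls i + ls i).
Proof.
move=> D hi; have ls_gt0 := decomp_gt0 D; have [_ [_ [sum1 _]]] := D.
have L0 := Lsum_ge0 ls_gt0 (ltnW hi).
have L1 : Lsum ls i.+1 <= 1 by rewrite -sum1 (Lsum_le ls_gt0).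
rewrite -LsumS /I01 /= L0 L1 (le_trans _ L1) ?(Lsum_le ls_gt0 (leqnSn _)) //.
by rewrite (Lsum_ge0 ls_gt0 hi).
Qed.

Lemma decomp_ext g g' n gs ls : minimal_decomp X g n gs ls ->
  (forall t, I01 t -> g' t = g t) -> minimal_decomp X g' n gs ls.
Proof.
move=> D E; have [n0 [hm [sum1 [hc hv]]]] := D; do 4 split=> //.
move=> i hi t ht; rewrite E; first exact: hv.
by have [IL ILl] := decomp_I01 D hi; apply: I01_between IL ILl ht.
Qed.

Lemma decomp_at0 g n gs ls : minimal_decomp X g n gs ls -> g 0 = gs 0%N 0.
Proof.
move=> D; have [n0 [_ [_ [_ hv]]]] := D.
have := hv _ n0 0; rewrite Lsum0 subrr mul0r; apply.
by rewrite lexx /= add0r ltW // (decomp_gt0 D).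
Qed.

Lemma decomp_at1 g n gs ls : minimal_decomp X g n gs ls -> g 1 = gs n.-1 1.
Proof.
move=> D; have [n0 [_ [sum1 [_ hv]]]] := D.
have hi : (n.-1 < n)%N by rewrite prednK.
have E : Lsum ls n.-1 + ls n.-1 = 1 by rewrite -LsumS prednK.
have l0 := decomp_gt0 D hi.
have := hv _ hi (Lsum ls n.-1 + ls n.-1).
rewrite (_ : (_ - Lsum ls n.-1) / ls n.-1 = 1); last by field; rewrite gt_eqF.
by rewrite E; apply; rewrite -E lexx andbT lerDl ltW.
Qed.

Lemma decomp_minimal g : minimal X g ->
  minimal_decomp X g 1 (fun _ => g) (fun _ => 1).
Proof.
move=> mg; do 2 split=> //; split; first by rewrite LsumS Lsum0 add0r.
split=> // i; rewrite ltnS leqn0 => /eqP -> t _.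
by rewrite Lsum0 subr0 divr1.
Qed.

Lemma decomp_reparam g n gs ls phi : is_mdspace X ->
  minimal_decomp X g n gs ls -> G11 phi ->
  exists gs' ls', minimal_decomp X (g \o phi) n gs' ls'.
Proof.
move=> [_ [reparam _]] D G; have [n0 [hm [sum1 [hc hv]]]] := D.
have [psi [Gpsi psiK phiK]] := G11_inv G.
have [_ mpsi _] := G11_monotone01 Gpsi.
have [_ _ phim] := G11_monotone01 G.
pose L i := Lsum ls i.
pose ls' i := psi (L i + ls i) - psi (L i).
pose th i := rescale phi (psi (L i)) (ls' i) (L i) (ls i).
have Lsum_ls' i : Lsum ls' i = psi (L i).
  rewrite /Lsum (telescope_sumr_eq (fun k => psi (L k))) //; last first.
    by move=> k _; rewrite /ls' /L LsumS.
  by rewrite /L Lsum0 (G11_0 Gpsi) subr0.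
have ls'_gt0 i : (i < n)%N -> 0 < ls' i.
  move=> hi; have [IL ILl] := decomp_I01 D hi.
  by rewrite subr_gt0 (G11_lt Gpsi) // ltrDl (decomp_gt0 D).
have thG i : (i < n)%N -> G11 (th i).
  move=> hi; have [IL ILl] := decomp_I01 D hi.
  exact: G11_restrict G Gpsi psiK phiK IL ILl (decomp_gt0 D hi).
exists (fun i => gs i \o th i), ls'; split=> //; split.
  move=> i hi; split; last exact: ls'_gt0.
  have [[mg mint] _] := hm i hi; split; first exact: reparam (thG i hi).
  by move=> t /(G11_interior (thG i hi)) /mint.
split; first by rewrite Lsum_ls' /L sum1 (G11_1 Gpsi).
split.
  move=> i hi /=; rewrite (G11_1 (thG i (ltnW hi))) (G11_0 (thG i.+1 hi)).
  exact: hc.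
move=> i hi t; rewrite Lsum_ls' => /andP[t1 t2] /=.
have [IL ILl] := decomp_I01 D hi.
have ILl' : psi (L i) + ls' i = psi (L i + ls i) by rewrite addrC subrK.
have It : I01 t by apply: I01_between (mpsi _ IL) (mpsi _ ILl) _; rewrite t1 -ILl'.
rewrite /th rescale_at_inverse ?lt0r_neq0 ?ls'_gt0 //.
apply: hv => //; apply/andP; split.
  by rewrite -{1}(phiK _ IL); apply: phim => //; apply: mpsi.
by rewrite -(phiK _ ILl); apply: phim => //; [apply: mpsi | rewrite -ILl'].
Qed.

Lemma decomp_ncomp g1 g2 n1 gs1 ls1 n2 gs2 ls2 :
  minimal_decomp X g1 n1 gs1 ls1 -> minimal_decomp X g2 n2 gs2 ls2 ->
  g1 1 = g2 0 ->
  minimal_decomp X (ncomp g1 g2) (n1 + n2) (catf n1 gs1 gs2)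
    (fun i => 2^-1 * catf n1 ls1 ls2 i).
Proof.
move=> D1 D2 E12.
have [n1_gt0 [hm1 [sum1 [hc1 hv1]]]] := D1.
have [n2_gt0 [hm2 [sum2 [hc2 hv2]]]] := D2.
set ls := fun i => _.
have Lsum_lo i : (i <= n1)%N -> Lsum ls i = 2^-1 * Lsum ls1 i.
  by move=> hi; rewrite /ls LsumZ Lsum_catf_lo.
have Lsum_hi k : Lsum ls (n1 + k) = 2^-1 + 2^-1 * Lsum ls2 k.
  by rewrite /ls LsumZ Lsum_catf_hi sum1 mulrDr mulr1.
have half_gt0 : 0 < 2^-1 :> R by rewrite invr_gt0.
split; first by rewrite addn_gt0 n1_gt0.
split.
  move=> i hi; rewrite /ls /catf; case: ifP => h.
    by have [? ?] := hm1 _ h; rewrite mulr_gt0.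
  have h' : (i - n1 < n2)%N by rewrite ltn_subLR // leqNgt h.
  by have [? ?] := hm2 _ h'; rewrite mulr_gt0.
split; first by rewrite Lsum_hi sum2; field.
split.
  move=> i hi; rewrite /catf; case: (ltnP i.+1 n1) => h.
    by rewrite (ltnW h); apply: hc1.
  case: (ltnP i n1) => h'; last by rewrite subSn //; apply: hc2; lia.
  have ei : i.+1 = n1 by apply/eqP; rewrite eqn_leq h' h.
  rewrite ei subnn (_ : i = n1.-1); last by rewrite -ei.
  by rewrite -(decomp_at1 D1) E12 (decomp_at0 D2).
move=> i hi t; rewrite /ls /catf; case: (ltnP i n1) => h.
  rewrite Lsum_lo ?(ltnW h) //; apply: ncomp_piece_lo (hv1 i h).
    by have := decomp_gt0 D1 h.
  by have [_ /andP[]] := decomp_I01 D1 h.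
rewrite -(subnKC h) Lsum_hi addKn; set k := (i - n1)%N.
have hk : (k < n2)%N by rewrite /k ltn_subLR.
apply: ncomp_piece_hi (hv2 k hk) => //; last by have := decomp_gt0 D2 hk.
by have := Lsum_ge0 (decomp_gt0 D2) (ltnW hk).
Qed.

Lemma decomp_breakpoint_state g n gs ls i : is_mdspace X ->
  minimal_decomp X g n gs ls -> (i < n)%N -> mstates X (g (Lsum ls i)).
Proof.
move=> [ends _] D hi; have [_ [hm [_ [_ hv]]]] := D.
have [[mg _] l0] := hm i hi.
rewrite (hv i hi) ?subrr ?mul0r; last by rewrite lexx lerDl ltW.
by have [_ []] := ends _ mg.
Qed.

Lemma decomp_interior_not_state g n gs ls i t :
  minimal_decomp X g n gs ls -> (i < n)%N ->
  Lsum ls i < t < Lsum ls i + ls i -> ~ mstates X (g t).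
Proof.
move=> [_ [hm [_ [_ hv]]]] hi /andP[t1 t2]; have [[_ mint] l0] := hm i hi.
rewrite (hv i hi) ?ltW //; apply: mint; apply/andP; split.
  by rewrite divr_gt0 // subr_gt0.
by rewrite ltr_pdivrMr // mul1r ltrBlDl.
Qed.

Lemma decomp_breakpoint_lt1 g n gs ls i : minimal_decomp X g n gs ls ->
  (i < n)%N -> Lsum ls i < 1.
Proof.
move=> D hi; have [_ [_ [<- _]]] := D.
exact: Lsum_lt (decomp_gt0 D) hi _.
Qed.

(* A break point of one decomposition cannot lie strictly inside a piece of
   another one, since break points are states. *)
Lemma decomp_next_breakpoint_ge g n gs ls n' gs' ls' i : is_mdspace X ->
  minimal_decomp X g n gs ls -> minimal_decomp X g n' gs' ls' ->
  (i < n)%N -> (i < n')%N -> Lsum ls i = Lsum ls' i ->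
  Lsum ls' i.+1 <= Lsum ls i.+1.
Proof.
move=> HX D D' hi hi' E; rewrite leNgt; apply/negP => lt.
have [_ [_ [sum1 _]]] := D; have [_ [_ [sum1' _]]] := D'.
have hn : (i.+1 < n)%N.
  rewrite ltn_neqAle hi andbT; apply/negP => /eqP en.
  have : Lsum ls' i.+1 <= 1 by rewrite -sum1' (Lsum_le (decomp_gt0 D')).
  by rewrite leNgt -sum1 -en lt.
apply: (decomp_interior_not_state D' hi' (t := Lsum ls i.+1)).
  by rewrite -LsumS lt andbT -E (Lsum_lt (decomp_gt0 D)).
exact: decomp_breakpoint_state HX D hn.
Qed.

Lemma decomp_breakpoints_eq g n gs ls n' gs' ls' i : is_mdspace X ->
  minimal_decomp X g n gs ls -> minimal_decomp X g n' gs' ls' ->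
  (i <= n)%N -> (i <= n')%N -> Lsum ls i = Lsum ls' i.
Proof.
move=> HX D D'; elim: i => [|i IH] hi hi'; first by rewrite !Lsum0.
have E := IH (ltnW hi) (ltnW hi').
apply/eqP; rewrite eq_le.
by rewrite (decomp_next_breakpoint_ge HX D' D) ?(decomp_next_breakpoint_ge HX D D').
Qed.

Lemma decomp_unique g n gs ls n' gs' ls' : is_mdspace X ->
  minimal_decomp X g n gs ls -> minimal_decomp X g n' gs' ls' ->
  n' = n /\ forall i, (i < n)%N ->
    (forall t, I01 t -> gs' i t = gs i t) /\ ls' i = ls i.
Proof.
move=> HX D D'; have EL := decomp_breakpoints_eq HX D D'.
have [_ [_ [sum1 [_ hv]]]] := D; have [_ [_ [sum1' [_ hv']]]] := D'.
have En : n' = n.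
  case: (ltngtP n' n) => // lt.
    by have := decomp_breakpoint_lt1 D lt; rewrite EL ?(ltnW lt) // sum1' ltxx.
  by have := decomp_breakpoint_lt1 D' lt; rewrite -EL ?(ltnW lt) // sum1 ltxx.
split=> // i hi; have hi' : (i < n')%N by rewrite En.
have el : ls' i = ls i.
  by have := EL i.+1 hi hi'; rewrite !LsumS EL ?(ltnW hi) ?(ltnW hi') // => /addrI.
split=> // t /andP[t0 t1]; have l0 := decomp_gt0 D hi.
have Ht : Lsum ls i <= Lsum ls i + t * ls i <= Lsum ls i + ls i.
  by apply/andP; split; [rewrite lerDl mulr_ge0 // ltW | rewrite lerD2l ger_pMl].
have := hv i hi _ Ht; have := hv' i hi' (Lsum ls i + t * ls i).
rewrite -EL ?(ltnW hi) ?(ltnW hi') // el => h' h.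
have e : (Lsum ls i + t * ls i - Lsum ls i) / ls i = t by field; rewrite gt_eqF.
by rewrite -e -h' // -h.
Qed.

End Decompositions.

Section DecomposablePaths.
Variable R : realType.

Definition with_paths (X : mdspace R) (Q : set (R -> X)) : mdspace R :=
  @MDSpace R X (mstates X) Q.

Definition decomposable (X : mdspace R) : set (R -> X) :=
  [set g | mpaths X g /\ exists n gs ls, minimal_decomp X g n gs ls].

Lemma decomposable_minimal (X : mdspace R) (g : R -> X) :
  minimal X g -> decomposable g.
Proof.
move=> mg; split; first by case: mg.
by exists 1%N, (fun=> g), (fun=> 1); apply: decomp_minimal.
Qed.

Lemma is_mdspace_decomposable (X : mdspace R) :
  is_mdspace X -> is_mdspace (with_paths (@decomposable X)).
Proof.
move=> HX; have [ends [reparam [comp ext]]] := HX.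
split; first by move=> g [/ends].
split.
  move=> g phi [hg [n [gs [ls D]]]] G; split; first exact: reparam.
  by have [gs' [ls' D']] := decomp_reparam HX D G; exists n, gs', ls'.
split.
  move=> g1 g2 [h1 [n1 [gs1 [ls1 D1]]]] [h2 [n2 [gs2 [ls2 D2]]]] E.
  split; first exact: comp.
  by exists (n1 + n2)%N, (catf n1 gs1 gs2), (fun i => 2^-1 * catf n1 ls1 ls2 i);
    apply: decomp_ncomp.
move=> g g' [hg [n [gs [ls D]]]] E; split; first exact: ext E.
by exists n, gs, ls; apply: decomp_ext D E.
Qed.

Lemma is_mdspace_pullback (Y X : mdspace R) (k : Y -> X) (Q : set (R -> X)) :
  is_mdspace Y -> is_mdspace (with_paths Q) ->
  is_mdspace (with_paths [set h | mpaths Y h /\ Q (k \o h)]).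
Proof.
move=> [ends [reparam [comp ext]]] [_ [Qreparam [Qcomp Qext]]].
split; first by move=> h [/ends].
split.
  by move=> h phi [hY hQ] G; split; [exact: reparam | exact: (Qreparam (k \o h))].
split.
  move=> h1 h2 [Y1 Q1] [Y2 Q2] E; split; first exact: comp.
  have -> : k \o ncomp h1 h2 = ncomp (k \o h1) (k \o h2).
    by apply: funext => t; rewrite /ncomp /=; case: ifP.
  by apply: Qcomp => //=; rewrite E.
move=> h h' [hY hQ] E; split; first exact: ext E.
by apply: (Qext _ _ hQ) => t It /=; rewrite E.
Qed.

End DecomposablePaths.

Section UniversalProperties.
Variable R : realType.

Definition ends_in_states (X : mdspace R) : Prop :=
  forall g, mpaths X g -> mstates X (g 0) /\ mstates X (g 1).

Lemma is_mdspace_ends (X : mdspace R) : is_mdspace X -> ends_in_states X.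
Proof. by case=> ends _ g /ends[]. Qed.

Lemma morphism_id (X : mdspace R) : morphism X X id.
Proof. by split; [move=> x; exact: cvg_id | split]. Qed.

Lemma morphism_with_paths (X Y : mdspace R) (Q : set (R -> Y)) (w : X -> Y) :
  morphism X Y w -> (forall g, mpaths X g -> Q (w \o g)) ->
  morphism X (with_paths Q) w.
Proof. by case=> cw [sw _] wQ; split=> //; split. Qed.

Lemma morphism_with_pathsW (X Y : mdspace R) (Q : set (R -> Y)) (w : X -> Y) :
  Q `<=` mpaths Y -> morphism X (with_paths Q) w -> morphism X Y w.
Proof. by move=> QY [cw [sw pw]]; split=> //; split=> // g /pw /QY. Qed.

(* The cocone also lands in [with_paths Q], so by uniqueness the identity of
   D factors through [with_paths Q]. *)
Lemma pushout_paths (A B C D : mdspace R) (i : A -> B) (phi : A -> C)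
    (j : C -> D) (psi : B -> D) (Q : set (R -> D)) :
  is_pushout i phi j psi -> is_mdspace (with_paths Q) -> Q `<=` mpaths D ->
  (forall g, mpaths C g -> Q (j \o g)) -> (forall g, mpaths B g -> Q (psi \o g)) ->
  mpaths D `<=` Q.
Proof.
move=> [HD [mj [mpsi [comm UP]]]] HQ QD jQ psiQ.
have [w [[mw [wj wpsi]] _]] := UP (with_paths Q) j psi HQ
  (morphism_with_paths mj jQ) (morphism_with_paths mpsi psiQ) comm.
have [w0 [_ w0_uniq]] := UP D j psi HD mj mpsi comm.
have w_id : w = id.
  rewrite (w0_uniq _ (morphism_with_pathsW QD mw) wj wpsi).
  by rewrite (w0_uniq _ (morphism_id D)).
by case: mw => _ [_ wQ] g /wQ; rewrite w_id.
Qed.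

Lemma colimit_paths (d : Order.disp_t) (O : orderType d) (P : set O)
    (Xs : O -> mdspace R) (f : forall a b : O, Xs a -> Xs b) (Y : mdspace R)
    (g : forall a : O, Xs a -> Y) (Q : set (R -> Y)) :
  is_colimit_on P Xs f Y g -> is_mdspace (with_paths Q) -> Q `<=` mpaths Y ->
  (forall a, P a -> forall h, mpaths (Xs a) h -> Q (g a \o h)) ->
  mpaths Y `<=` Q.
Proof.
move=> [HY [mg [comm UP]]] HQ QY gQ.
have mgQ a : P a -> morphism (Xs a) (with_paths Q) (g a).
  by move=> Pa; apply: morphism_with_paths (mg a Pa) (gQ a Pa).
have [w [[mw wg] _]] := UP (with_paths Q) g HQ mgQ comm.
have [w0 [_ w0_uniq]] := UP Y g HY mg comm.
have w_id : w = id.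
  by rewrite (w0_uniq _ (morphism_with_pathsW QY mw) wg) (w0_uniq _ (morphism_id Y)).
by case: mw => _ [_ wQ] h /wQ; rewrite w_id.
Qed.

(* The initial topology of a constant map is indiscrete. *)
Definition indiscrete_bool : topologicalType :=
  initial_topology (fun _ : bool => true).

Lemma continuous_indiscrete_bool (T : topologicalType) (w : T -> indiscrete_bool) :
  continuous w.
Proof. by apply: continuous_comp_initial; exact: cst_continuous. Qed.

Definition state_test : mdspace R :=
  @MDSpace R indiscrete_bool [set false] [set g | g 0 = false /\ g 1 = false].

Lemma is_mdspace_state_test : is_mdspace state_test.
Proof.
split; [|split; [|split]].
- by move=> g [g0 g1]; split; [exact: continuous_indiscrete_bool | rewrite /= g0 g1].
- by move=> g phi [g0 g1] G; rewrite /= /comp G11_0 // G11_1.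
- move=> g1 g2 [a0 a1] [b0 b1] _; rewrite /= /ncomp /= mulr0 ifT ?invr_ge0 //.
  rewrite mulr1 ifF; last by apply/negbTE; rewrite -ltNge invf_lt1 ?ltr1n.
  by rewrite (_ : (2 : R) - 1 = 1) //; lra.
- move=> g g' [a0 a1] E; have I0 := @I01_zero R; have I1 := @I01_one R.
  by rewrite /= !E.
Qed.

Lemma morphism_state_test (X : mdspace R) (w : X -> indiscrete_bool) :
  ends_in_states X -> (forall x, mstates X x -> w x = false) ->
  morphism X state_test w.
Proof.
move=> ends ws; split; first exact: continuous_indiscrete_bool.
by split=> [x /ws | g /ends[s0 s1]]; rewrite //= /comp !ws.
Qed.

Lemma state_test_true_not_state (X : mdspace R) (w : X -> indiscrete_bool) x :
  morphism X state_test w -> w x -> ~ mstates X x.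
Proof. by case=> _ [ws _] wx /ws; rewrite /= wx. Qed.

Lemma pushout_not_state_new (A B C D : mdspace R) (i : A -> B) (phi : A -> C)
    (j : C -> D) (psi : B -> D) (x : B) :
  is_pushout i phi j psi -> ends_in_states B ->
  (forall a, i a <> x) -> ~ mstates B x -> ~ mstates D (psi x).
Proof.
move=> [_ [_ [_ [_ UP]]]] endsB ix Bx.
pose v q : indiscrete_bool := `[< q = x >].
have mu : morphism C state_test (fun=> false).
  by split; [exact: continuous_indiscrete_bool | split].
have mv : morphism B state_test v.
  by apply: morphism_state_test => // y By; apply/asboolP => exy; rewrite exy in By.
have comm : (fun=> false) \o phi = v \o i.
  by apply: funext => a; apply/esym/asboolP; exact: ix.
have [w [[mw [_ wpsi]] _]] := UP _ _ _ is_mdspace_state_test mu mv comm.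
have wx : w (psi x) = v x by rewrite -wpsi.
by apply: (state_test_true_not_state mw); rewrite wx /v asboolT.
Qed.

Lemma pushout_not_state_old (A B C D : mdspace R) (i : A -> B) (phi : A -> C)
    (j : C -> D) (psi : B -> D) (p : C) :
  is_pushout i phi j psi -> injective i ->
  (forall y, mstates B (i y) -> mstates A y) -> morphism A C phi ->
  is_mdspace C -> ends_in_states B -> ~ mstates C p -> ~ mstates D (j p).
Proof.
move=> [_ [_ [_ [_ UP]]]] i_inj i_states [_ [phi_states _]] HC endsB Cp.
pose u c : indiscrete_bool := `[< c = p >].
pose v q : indiscrete_bool := `[< exists y, i y = q /\ phi y = p >].
have mu : morphism C state_test u.
  apply: morphism_state_test; first exact: is_mdspace_ends.
  by move=> y Cy; apply/asboolP => eyp; rewrite eyp in Cy.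
have mv : morphism B state_test v.
  apply: morphism_state_test => // q Bq; apply/asboolP => -[y [iy phiy]].
  by apply: Cp; rewrite -phiy; apply/phi_states/i_states; rewrite iy.
have comm : u \o phi = v \o i.
  apply: funext => a /=; apply/asboolP/asboolP => [phia | [y [/i_inj -> //]]].
  by exists a.
have [w [[mw [wj _]] _]] := UP _ _ _ is_mdspace_state_test mu mv comm.
have wp : w (j p) = u p by rewrite -wj.
by apply: (state_test_true_not_state mw); rewrite wp /u asboolT.
Qed.

Lemma colimit_not_state (d : Order.disp_t) (O : orderType d) (P : set O)
    (Xs : O -> mdspace R) (f : forall a b : O, Xs a -> Xs b) (Y : mdspace R)
    (g : forall a : O, Xs a -> Y) (b : O) (p : Xs b) :
  is_colimit_on P Xs f Y g -> (forall a, is_mdspace (Xs a)) ->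
  (forall a c, (a <= c)%O -> morphism (Xs a) (Xs c) (f a c)) ->
  (forall a, f a a = id) ->
  (forall a c e, (a <= c)%O -> (c <= e)%O -> f c e \o f a c = f a e) ->
  P b -> (forall c, P c -> (b <= c)%O -> ~ mstates (Xs c) (f b c p)) ->
  ~ mstates Y (g b p).
Proof.
move=> [_ [_ [_ UP]]] mds mor fid fcomp Pb not_state.
have fc a c e (z : Xs a) : (a <= c)%O -> (c <= e)%O -> f c e (f a c z) = f a e z.
  by move=> ac ce; rewrite -(fcomp a c e ac ce).
pose h a (y : Xs a) : indiscrete_bool :=
  `[< exists c, [/\ P c, (a <= c)%O, (b <= c)%O & f a c y = f b c p] >].
have mh a : P a -> morphism (Xs a) state_test (h a).
  move=> Pa; apply: morphism_state_test; first exact: is_mdspace_ends.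
  move=> y ya; apply/asboolP => -[c [Pc ac bc E]].
  have [_ [f_states _]] := mor a c ac.
  by apply: (not_state c Pc bc); rewrite -E; exact: f_states.
have hcomm a c : P a -> P c -> (a <= c)%O -> h c \o f a c = h a.
  move=> Pa Pc ac; apply: funext => y /=.
  apply/asboolP/asboolP => -[e [Pe xe be E]].
    by exists e; split=> //; [exact: le_trans ac xe | rewrite -E fc].
  case/orP: (le_total e c) => [ec | ce].
    exists c; rewrite lexx; split=> //; first exact: le_trans be ec.
    by rewrite fid -(fc _ _ _ y xe ec) E fc.
  by exists e; split=> //; rewrite fc.
have [w [[mw wg] _]] := UP state_test h is_mdspace_state_test mh hcomm.
have wp : w (g b p) = h b p by rewrite -(wg b Pb).
apply: (state_test_true_not_state mw); rewrite wp /h asboolT //.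
by exists b; rewrite fid.
Qed.

End UniversalProperties.

Section Globes.
Variable R : realType.

Lemma glob_pi_eq (Z : topologicalType) (x y : glob_pre R Z) :
  \pi_(glob R Z) x = \pi_(glob R Z) y <-> glob_key x = glob_key y.
Proof. by split=> [/eqquotP/asboolP | E]; last by apply/eqquotP/asboolP. Qed.

Lemma glob_key_repr (Z : topologicalType) (x : glob_pre R Z) :
  glob_key (repr (\pi_(glob R Z) x)) = glob_key x.
Proof. by apply/glob_pi_eq; rewrite reprK. Qed.

Definition glob_key_map (Z Z' : topologicalType) (h : Z -> Z')
    (k : bool + glob_pre R Z) : bool + glob_pre R Z' :=
  match k with inl b => inl b | inr w => inr (glob_pre_map h w) end.

Lemma glob_key_pre_map (Z Z' : topologicalType) (h : Z -> Z') (x : glob_pre R Z) :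
  glob_key (glob_pre_map h x) = glob_key_map h (glob_key x).
Proof. by case: x => [[] y] //=; case: y => z t /=; case: ifP => _ //; case: ifP. Qed.

Lemma glob_map_pi (Z Z' : topologicalType) (h : Z -> Z') (x : glob_pre R Z) :
  glob_map h (\pi_(glob R Z) x) = \pi_(glob R Z') (glob_pre_map h x).
Proof. by apply/glob_pi_eq; rewrite !glob_key_pre_map glob_key_repr. Qed.

Lemma glob_pre_map_inj (Z Z' : topologicalType) (h : Z -> Z') :
  injective h -> injective (glob_pre_map (R:=R) h).
Proof.
move=> h_inj [[] y1] [[] y2] //= /(inj_pair2_eq_dec _ Bool.bool_dec _ _ _ _) E.
  by rewrite E.
by case: y1 E => z1 t1; case: y2 => z2 t2 /= [/h_inj -> ->].
Qed.

Lemma glob_map_inj (Z Z' : topologicalType) (h : Z -> Z') :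
  injective h -> injective (glob_map (R:=R) h).
Proof.
move=> h_inj q1 q2 /glob_pi_eq; rewrite !glob_key_pre_map => E.
rewrite -(reprK q1) -(reprK q2); apply/glob_pi_eq.
move: E; case: (glob_key (repr q1)) => a; case: (glob_key (repr q2)) => b //=.
  by case=> ->.
by case=> /(glob_pre_map_inj h_inj) ->.
Qed.

Lemma to01_val (t : R) : I01 t -> sval (to01 t) = t.
Proof. by rewrite /to01; case: pselect. Qed.

Lemma glob_cyl0 (Z : topologicalType) (z : Z) : glob_cyl z 0 = glob_pt R Z false.
Proof. by apply/glob_pi_eq => /=; rewrite to01_val ?eqxx //; exact: I01_zero. Qed.

Lemma glob_cyl1 (Z : topologicalType) (z : Z) : glob_cyl z 1 = glob_pt R Z true.
Proof.
by apply/glob_pi_eq => /=; rewrite to01_val ?oner_eq0 ?eqxx //; exact: I01_one.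
Qed.

Lemma glob_key_interior (Z : topologicalType) (z : Z) (t : R) : 0 < t < 1 ->
  glob_key (existT (glob_fam R Z) false (z, to01 t)) =
  inr (existT (glob_fam R Z) false (z, to01 t)).
Proof.
move=> /andP[t0 t1] /=; rewrite to01_val; last by rewrite /I01 /= !ltW.
by rewrite gt_eqF // lt_eqF.
Qed.

Lemma glob_interior_not_state (Z : topologicalType) (z : Z) (t : R) :
  0 < t < 1 -> ~ mstates (Glob R Z) (glob_cyl z t).
Proof. by move=> t01 [b /glob_pi_eq]; rewrite glob_key_interior. Qed.

Lemma glob_ends_in_states (Z : topologicalType) : ends_in_states (Glob R Z).
Proof.
move=> g [z [phi [G E]]]; have I0 := @I01_zero R; have I1 := @I01_one R.
rewrite !E //.
rewrite (G11_0 G) (G11_1 G) glob_cyl0 glob_cyl1.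
by split; [exists false | exists true].
Qed.

Lemma cell_incl_cyl n (z : Sph R n) t :
  cell_incl (glob_cyl z t) = glob_cyl (sph_to_dsk z) t.
Proof. exact: glob_map_pi. Qed.

Lemma cell_incl_inj n : injective (@cell_incl R n).
Proof. by apply/glob_map_inj => -[x hx] [y hy] [exy]; apply/val_inj. Qed.

Lemma cell_incl_state n y : mstates (Glob R (Dsk R n)) (cell_incl y) ->
  mstates (Glob R (Sph R n)) y.
Proof.
move=> [b E]; exists b; apply: (@cell_incl_inj n).
by rewrite E /cell_incl glob_map_pi.
Qed.

Lemma cell_incl_interior n (z : Dsk R n) t :
  \sum_(i < n) (sval z) ord0 i ^+ 2 < 1 -> 0 < t < 1 ->
  forall a, cell_incl a <> glob_cyl z t.
Proof.
move=> z_int t01 a; rewrite -(reprK a) /cell_incl /glob_cyl glob_map_pi.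
move/glob_pi_eq; rewrite glob_key_pre_map glob_key_interior //.
case: (repr a) => [[] y] //=; case: y => z' s /=.
case: ifP => // _; case: ifP => // _.
move=> /(congr1 (fun k => if k is inr w then w else existT _ true true)) /=.
move=> /(inj_pair2_eq_dec _ Bool.bool_dec _ _ _ _) [ez _].
by move: z_int; rewrite -ez /= (set_mem (svalP z')) ltxx.
Qed.

Lemma disk_boundary n (z : Dsk R n) : \sum_(i < n) (sval z) ord0 i ^+ 2 = 1 ->
  exists z' : Sph R n, sph_to_dsk z' = z.
Proof. by move=> /mem_set z1; exists (exist _ (sval z) z1); apply/val_inj. Qed.

End Globes.

Lemma ordinal_trichotomy (d : Order.disp_t) (O : orderType d) (c : O) :
  is_least c \/ (exists a, is_succ a c) \/ is_limit c.
Proof.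
have [c_least | c_least] := pselect (is_least c); first by left.
have [c_succ | c_succ] := pselect (exists a, is_succ a c); first by right; left.
by right; right; split=> // a ac; apply: c_succ; exists a.
Qed.

Section CellularTower.
(* Otherwise the binders [a b] of [f] would become implicit. *)
Local Unset Implicit Arguments.
Variables (R : realType) (X : mdspace R) (d : Order.disp_t) (O : orderType d)
  (Xs : O -> mdspace R) (f : forall a b : O, Xs a -> Xs b)
  (g : forall a : O, Xs a -> X).
Hypotheses (lt_wf : well_founded (fun a b : O => (a < b)%O))
  (Xs_mds : forall a, is_mdspace (Xs a))
  (f_mor : forall a b, (a <= b)%O -> morphism (Xs a) (Xs b) (f a b))
  (f_id : forall a, f a a = id)
  (f_comp : forall a b c, (a <= b)%O -> (b <= c)%O -> f b c \o f a b = f a c)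
  (least_no_paths : forall a, is_least a -> mpaths (Xs a) = set0)
  (succ_pushout : forall a b, is_succ a b ->
     exists (n : nat) (phi : Glob R (Sph R n) -> Xs a)
       (psi : Glob R (Dsk R n) -> Xs b),
       morphism (Glob R (Sph R n)) (Xs a) phi /\
       is_pushout (@cell_incl R n) phi (f a b) psi)
  (limit_colimit : forall b, is_limit b ->
     is_colimit_on [set a | (a < b)%O] Xs f (Xs b) (fun a => f a b))
  (X_colimit : is_colimit_on setT Xs f X g).
Local Set Implicit Arguments.

Lemma cocone_comm a b (y : Xs a) : (a <= b)%O -> g b (f a b y) = g a y.
Proof. by have [_ [_ [gf _]]] := X_colimit; move=> ab; rewrite -(gf a b I I ab). Qed.

Lemma cell_interior_not_state_tower b0 b n (phi : Glob R (Sph R n) -> Xs b0)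
    (psi : Glob R (Dsk R n) -> Xs b) (z : Dsk R n) (s : R) :
  is_pushout (@cell_incl R n) phi (f b0 b) psi ->
  \sum_(i < n) (sval z) ord0 i ^+ 2 < 1 -> 0 < s < 1 ->
  forall c, (b <= c)%O -> ~ mstates (Xs c) (f b c (psi (glob_cyl z s))).
Proof.
move=> po z_int s01; apply: (well_founded_ind lt_wf) => c IH.
rewrite le_eqVlt => /orP[/eqP <- | bc].
  rewrite f_id; apply: (pushout_not_state_new po (@glob_ends_in_states R _)).
    exact: cell_incl_interior.
  exact: glob_interior_not_state.
case: (ordinal_trichotomy c) => [c_least | [[a ac] | c_lim]].
- by case: (c_least b).
- have ba : (b <= a)%O.
    by rewrite leNgt; apply/negP => ab; case: ac => _ /(_ b); apply.
  have [n' [phi' [psi' [mphi' po']]]] := succ_pushout _ _ ac.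
  rewrite -(f_comp _ _ _ ba (ltW ac.1)) /=.
  apply: (pushout_not_state_old po' (@cell_incl_inj R n') (@cell_incl_state R n')
    mphi' (Xs_mds a) (@glob_ends_in_states R _)).
  exact: IH a ac.1 ba.
- apply: (colimit_not_state (limit_colimit _ c_lim)
    Xs_mds f_mor f_id f_comp bc).
  by move=> c' c'c bc'; exact: IH c' c'c bc'.
Qed.

Lemma cell_interior_not_state b0 b n (phi : Glob R (Sph R n) -> Xs b0)
    (psi : Glob R (Dsk R n) -> Xs b) (z : Dsk R n) (s : R) :
  is_pushout (@cell_incl R n) phi (f b0 b) psi ->
  \sum_(i < n) (sval z) ord0 i ^+ 2 < 1 -> 0 < s < 1 ->
  ~ mstates X (g b (psi (glob_cyl z s))).
Proof.
move=> po z_int s01.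
apply: (colimit_not_state X_colimit Xs_mds f_mor f_id f_comp) => // c _.
exact: cell_interior_not_state_tower po z_int s01 c.
Qed.

Lemma cell_paths_decomposable a' a n (phi : Glob R (Sph R n) -> Xs a')
    (psi : Glob R (Dsk R n) -> Xs a) :
  is_pushout (@cell_incl R n) phi (f a' a) psi ->
  morphism (Glob R (Sph R n)) (Xs a') phi -> (a' <= a)%O ->
  (forall h, mpaths (Xs a') h -> decomposable (g a' \o h)) ->
  forall h, mpaths (Glob R (Dsk R n)) h -> decomposable (g a \o (psi \o h)).
Proof.
move=> po [_ [_ phi_paths]] a'a IH h [z [ph [G E]]].
have [HX [g_mor _]] := X_colimit.
have [_ [_ [[_ [_ psi_paths]] [comm _]]]] := po.
have /set_mem := svalP z; rewrite /disk /= le_eqVlt => /orP[/eqP z1 | z_int].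
  have [z' ez'] := disk_boundary z1.
  have h'_path : mpaths (Glob R (Sph R n)) (fun t => glob_cyl z' (ph t)).
    by exists z', ph.
  have [_ [_ [_ ext]]] := is_mdspace_decomposable HX.
  apply: (ext _ _ (IH _ (phi_paths _ h'_path))) => t It /=.
  rewrite E // -ez' -cell_incl_cyl -(cocone_comm _ a'a).
  by have /= -> := congr1 (fun F => F (glob_cyl z' (ph t))) comm.
apply: decomposable_minimal; split.
  by have [_ [_ ]] := g_mor a I; apply; apply: psi_paths; exists z, ph.
move=> t /[dup] /andP[t0 t1] t01 /=; rewrite E; last by rewrite /I01 /= !ltW.
exact: cell_interior_not_state po z_int (G11_interior G t01).
Qed.

Lemma stage_paths_decomposable a h : mpaths (Xs a) h -> decomposable (g a \o h).
Proof.
have [HX _] := X_colimit.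
elim/(well_founded_ind lt_wf): a h => a IH.
pose Q := [set h | mpaths (Xs a) h /\ decomposable (g a \o h)].
suff sub : mpaths (Xs a) `<=` Q by move=> h /sub[].
have HQ : is_mdspace (with_paths Q).
  exact: is_mdspace_pullback (Xs_mds a) (is_mdspace_decomposable HX).
have QXs : Q `<=` mpaths (Xs a) by move=> h [].
case: (ordinal_trichotomy a) => [a_least | [[a' a'a] | a_lim]].
- by rewrite least_no_paths //; exact: sub0set.
- have [n [phi [psi [mphi po]]]] := succ_pushout _ _ a'a.
  have [_ [[_ [_ j_paths]] [[_ [_ psi_paths]] _]]] := po.
  apply: (pushout_paths po HQ QXs) => h hh; split.
  + exact: j_paths.
  + rewrite (_ : g a \o (f a' a \o h) = g a' \o h); first exact: IH a' a'a.1 h hh.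
    by apply: funext => t /=; rewrite cocone_comm // ltW // a'a.1.
  + exact: psi_paths.
  + exact: cell_paths_decomposable po mphi (ltW a'a.1) (IH a' a'a.1) h hh.
- apply: (colimit_paths (limit_colimit _ a_lim) HQ QXs) => c ca h hh; split.
    by case: (f_mor _ _ (ltW ca)) => _ [_]; apply.
  rewrite (_ : g a \o (f c a \o h) = g c \o h); first exact: IH c ca h hh.
  by apply: funext => t /=; rewrite cocone_comm // ltW.
Qed.

End CellularTower.

Theorem theorem5p9 (R : realType) (X : mdspace R) (hX : cellular X)
    (gam : R -> X) (hgam : mpaths X gam) :
  exists (n : nat) (gs : nat -> R -> X) (ls : nat -> R),
    minimal_decomp X gam n gs ls /\
    forall (n' : nat) (gs' : nat -> R -> X) (ls' : nat -> R),
      minimal_decomp X gam n' gs' ls' ->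
      n' = n /\
      forall i, (i < n)%N -> (forall t, I01 t -> gs' i t = gs i t) /\ ls' i = ls i.
Proof.
case: hX => d [Ord [Xs [f [g tower]]]].
case: tower => lt_wf [mds [mor [fid [fcomp [least [succ [lim_colim col]]]]]]].
have HX : is_mdspace X by case: col.
have no_paths a : is_least a -> mpaths (Xs a) = set0 by case/least=> _ [].
have [_ [n [gs [ls D]]]] : decomposable gam.
  apply: (colimit_paths col (is_mdspace_decomposable HX)) => //; first by move=> h [].
  move=> a _ h.
  exact: (stage_paths_decomposable lt_wf mds mor fid fcomp no_paths succ
    lim_colim col).
exists n, gs, ls; split=> // n' gs' ls' D'.
exact: decomp_unique HX D D'.
Qed.
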